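(* Let $S$ be a (Hausdorff) topological semigroup such that $S\times S$ is countably compact. Then $S$ does not contain a subsemigroup isomorphic to the semigroup $B_\omega$ of $\omega\times\omega$-matrix units.
   Context: A topological semigroup is a Hausdorff space with a continuous associative multiplication. For a nonzero cardinal $\lambda$, the semigroup of $\lambda\times\lambda$-matrix units is $B_\lambda=(\lambda\times\lambda)\cup\{0\}$ with $(a,b)\cdot(c,d)=(a,d)$ if $b=c$, $(a,b)\cdot(c,d)=0$ if $b\neq c$, and $0$ a zero element. $\omega$ is the first infinite cardinal. *)

From Stdlib Require Import Arith.

Set Implicit Arguments.

Definition is_topology (X : Type) (opn : (X -> Prop) -> Prop) : Prop :=
  opn (fun _ => True) /\
  (forall U V, opn U -> opn V -> opn (fun x => U x /\ V x)) /\
  (forall (I : Type) (F : I -> X -> Prop),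
      (forall i, opn (F i)) -> opn (fun x => exists i, F i x)).

Definition hausdorff (X : Type) (opn : (X -> Prop) -> Prop) : Prop :=
  forall x y : X, x <> y ->
    exists U V, opn U /\ opn V /\ U x /\ V y /\ (forall z, U z -> V z -> False).

Definition prod_open (X Y : Type) (opX : (X -> Prop) -> Prop)
  (opY : (Y -> Prop) -> Prop) (W : X * Y -> Prop) : Prop :=
  forall p, W p -> exists U V, opX U /\ opY V /\ U (fst p) /\ V (snd p) /\
    (forall x y, U x -> V y -> W (x, y)).

Definition countably_compact (X : Type) (opn : (X -> Prop) -> Prop) : Prop :=
  forall U : nat -> X -> Prop,
    (forall n, opn (U n)) -> (forall x, exists n, U n x) ->
    exists N, forall x, exists n, n <= N /\ U n x.

Definition jointly_continuous (S : Type) (opn : (S -> Prop) -> Prop)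
  (mul : S -> S -> S) : Prop :=
  forall W, opn W -> prod_open opn opn (fun p => W (mul (fst p) (snd p))).

Definition associative (S : Type) (mul : S -> S -> S) : Prop :=
  forall x y z, mul x (mul y z) = mul (mul x y) z.

(* The semigroup B_omega of omega x omega matrix units: None is the zero,
   Some (a, b) is the matrix unit (a, b), a b : nat. *)
Definition Bomega : Type := option (nat * nat).

Definition Bmul (u v : Bomega) : Bomega :=
  match u, v with
  | Some (a, b), Some (c, d) => if Nat.eqb b c then Some (a, d) else None
  | _, _ => None
  end.

(* An injective semigroup homomorphism B_omega -> S; its image is exactly a
   subsemigroup of S isomorphic to B_omega, and conversely. *)
Definition semigroup_embedding (S : Type) (mul : S -> S -> S)
  (f : Bomega -> S) : Prop :=
  (forall u v, f u = f v -> u = v) /\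
  (forall u v, f (Bmul u v) = mul (f u) (f v)).

(* The sequence (f(0,n), f(n,0)) has a cluster point (x, y) in the countably
   compact space S x S.  By continuity of the multiplication, every
   neighbourhood of xy contains a product f(0,n) f(m,0) with n, m both taken
   from an infinite set of indices; taking n = m gives f(0,0), taking n <> m
   gives f(0) (the image of the zero).  So xy lies in the closures of the
   points f(0,0) and f(0), which in a Hausdorff space forces
   f(0,0) = xy = f(0), contradicting injectivity. *)
From Stdlib Require Import Arith Lia Classical.

Definition union_closed {X : Type} (opn : (X -> Prop) -> Prop) : Prop :=
  forall (I : Type) (F : I -> X -> Prop),
    (forall i, opn (F i)) -> opn (fun x => exists i, F i x).

Lemma prod_open_union_closed {X Y : Type} (opX : (X -> Prop) -> Prop)
  (opY : (Y -> Prop) -> Prop) : union_closed (prod_open opX opY).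
Proof.
  intros I F HF p [i Fp].
  destruct (HF i p Fp) as [U [V [HU [HV [Up [Vp HUV]]]]]].
  exists U, V; repeat split; auto.
  intros x y Ux Vy; exists i; auto.
Qed.

Lemma prod_open_box {X Y : Type} {opX : (X -> Prop) -> Prop}
  {opY : (Y -> Prop) -> Prop} {U : X -> Prop} {V : Y -> Prop} :
  opX U -> opY V -> prod_open opX opY (fun p => U (fst p) /\ V (snd p)).
Proof.
  intros HU HV p [Up Vp].
  exists U, V; repeat split; auto.
Qed.

Definition cluster_point {X : Type} (opn : (X -> Prop) -> Prop)
  (p : nat -> X) (q : X) : Prop :=
  forall W, opn W -> W q -> forall N, exists n, N <= n /\ W (p n).

Lemma countably_compact_cluster_point {X : Type} {opn : (X -> Prop) -> Prop} :
  union_closed opn -> countably_compact opn ->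
  forall p : nat -> X, exists q, cluster_point opn p q.
Proof.
  intros Hunion Hcc p.
  apply NNPP; intros Hnone.
  (* U N is the union of the open sets meeting the sequence only before N. *)
  set (U := fun N q => exists W : {W : X -> Prop | opn W /\
                                     forall n, W (p n) -> n < N},
                         proj1_sig W q).
  destruct (Hcc U) as [N0 HN0].
  - intros N; apply Hunion; intros W; exact (proj1 (proj2_sig W)).
  - intros q.
    assert (Hq : ~ cluster_point opn p q) by (intros Hcl; eauto).
    apply not_all_ex_not in Hq as [W Hq].
    apply imply_to_and in Hq as [HW Hq].
    apply imply_to_and in Hq as [Wq Hq].
    apply not_all_ex_not in Hq as [N HN].
    assert (Hbefore : forall n, W (p n) -> n < N).
    { intros n Wn; apply NNPP; intros Hge; apply HN; exists n; split; [lia | exact Wn]. }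
    exists N, (exist _ W (conj HW Hbefore)); exact Wq.
  - destruct (HN0 (p (S N0))) as [n [HnN0 [[W HW] Wp]]].
    simpl in Wp; destruct HW as [_ Hbefore].
    specialize (Hbefore _ Wp); lia.
Qed.

Lemma hausdorff_adherent_eq {X : Type} {opn : (X -> Prop) -> Prop} {z u : X} :
  hausdorff opn -> (forall W, opn W -> W z -> W u) -> z = u.
Proof.
  intros Hhaus Hadh.
  apply NNPP; intros Hzu.
  destruct (Hhaus _ _ Hzu) as [A [B [HA [_ [Az [Bu Hdisj]]]]]].
  exact (Hdisj u (Hadh A HA Az) Bu).
Qed.

Lemma cluster_point_mul {S : Type} {opn : (S -> Prop) -> Prop}
  {mul : S -> S -> S} {a b : nat -> S} {x y : S} :
  jointly_continuous opn mul ->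
  cluster_point (prod_open opn opn) (fun n => (a n, b n)) (x, y) ->
  forall W, opn W -> W (mul x y) ->
    exists P : nat -> Prop, (forall N, exists n, N <= n /\ P n) /\
      (forall n m, P n -> P m -> W (mul (a n) (b m))).
Proof.
  intros Hcont Hcl W HW Wxy.
  destruct (Hcont W HW (x, y) Wxy) as [A [B [HA [HB [Ax [By HAB]]]]]].
  exists (fun n => A (a n) /\ B (b n)); split.
  - exact (Hcl _ (prod_open_box HA HB) (conj Ax By)).
  - intros n m [An _] [_ Bm]; exact (HAB _ _ An Bm).
Qed.

Lemma Bmul_units (n m : nat) :
  Bmul (Some (0, n)) (Some (m, 0)) = if Nat.eqb n m then Some (0, 0) else None.
Proof. reflexivity. Qed.

Theorem theorem3 (S : Type) (opn : (S -> Prop) -> Prop) (mul : S -> S -> S)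
  (Htop : is_topology opn) (Hhaus : hausdorff opn)
  (Hassoc : associative mul) (Hcont : jointly_continuous opn mul)
  (Hcc : countably_compact (prod_open opn opn)) :
  ~ (exists f : Bomega -> S, semigroup_embedding mul f).
Proof.
  intros [f [Hinj Hhom]].
  set (a := fun n => f (Some (0, n))).
  set (b := fun n => f (Some (n, 0))).
  destruct (countably_compact_cluster_point (prod_open_union_closed opn opn) Hcc
              (fun n => (a n, b n))) as [[x y] Hcl].
  assert (Hprod : forall n m, mul (a n) (b m) =
                              f (if Nat.eqb n m then Some (0, 0) else None)).
  { intros n m; rewrite <- Bmul_units; symmetry; apply Hhom. }
  assert (Hdiag : mul x y = f (Some (0, 0))).
  { apply (hausdorff_adherent_eq Hhaus); intros W HW Wxy.
    destruct (cluster_point_mul Hcont Hcl _ HW Wxy) as [P [Hinf HP]].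
    destruct (Hinf 0) as [n [_ Pn]].
    specialize (HP n n Pn Pn); rewrite Hprod, Nat.eqb_refl in HP; exact HP. }
  assert (Hzero : mul x y = f None).
  { apply (hausdorff_adherent_eq Hhaus); intros W HW Wxy.
    destruct (cluster_point_mul Hcont Hcl _ HW Wxy) as [P [Hinf HP]].
    destruct (Hinf 0) as [n [_ Pn]]; destruct (Hinf (n + 1)) as [m [Hnm Pm]].
    specialize (HP n m Pn Pm).
    rewrite Hprod in HP; replace (Nat.eqb n m) with false in HP
      by (symmetry; apply Nat.eqb_neq; lia).
    exact HP. }
  rewrite Hdiag in Hzero.
  discriminate (Hinj _ _ Hzero).
Qed.
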